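(* Let $C\in\mathscr{C}$ and let $K_C$ be obtained as follows: choose a distinguished triangle $S[-1]\to C\overset{a}{\to}T\to S$ with $S\in\mathcal{S},T\in\mathcal{T}$; choose a distinguished triangle $U\to T\overset{b}{\to}V[1]\to U[1]$ with $U\in\mathcal{U},V\in\mathcal{V}$; and choose a distinguished triangle $V\to K_C\overset{k_C}{\to}C\overset{b\circ a}{\to}V[1]$. Then: (1) $K_C\in\mathscr{C}^-$; (2) if $C\in\mathscr{C}^+$, then $K_C\in\mathcal{H}$.
   Context: $\mathscr{C}$ is a triangulated category with shift $[1]$; subcategories are full, additive, closed under isomorphisms and direct summands. $\mathrm{Ext}^1(X,Y)=\mathscr{C}(X,Y[1])$. $\mathcal{M}\ast\mathcal{N}$ is the full subcategory of objects $C$ admitting a distinguished triangle $M\to C\to N\to M[1]$ with $M\in\mathcal{M}$, $N\in\mathcal{N}$. A cotorsion pair $(\mathcal{U},\mathcal{V})$: $\mathrm{Ext}^1(\mathcal{U},\mathcal{V})=0$ and $\mathscr{C}=\mathcal{U}\ast\mathcal{V}[1]$. Fix a twin cotorsion pair, i.e. cotorsion pairs $(\mathcal{S},\mathcal{T}),(\mathcal{U},\mathcal{V})$ with $\mathrm{Ext}^1(\mathcal{S},\mathcal{V})=0$. Put $\mathcal{W}=\mathcal{T}\cap\mathcal{U}$, $\mathscr{C}^-=\mathcal{S}[-1]\ast\mathcal{W}$, $\mathscr{C}^+=\mathcal{W}\ast\mathcal{V}[1]$, $\mathcal{H}=\mathscr{C}^+\cap\mathscr{C}^-$. *)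

From HB Require Import structures.
From mathcomp Require Import all_boot all_algebra.
Set Implicit Arguments.
Unset Strict Implicit.
Unset Printing Implicit Defensive.
Import GRing.Theory.
Local Open Scope ring_scope.

Record TriCat := {
  obj : Type;
  Mor : obj -> obj -> zmodType;
  cmp : forall X Y Z : obj, Mor Y Z -> Mor X Y -> Mor X Z;
  idm : forall X : obj, Mor X X;
  cmp_assoc : forall X Y Z W (h : Mor Z W) (g : Mor Y Z) (f : Mor X Y),
      cmp h (cmp g f) = cmp (cmp h g) f;
  cmp_idl : forall X Y (f : Mor X Y), cmp (idm Y) f = f;
  cmp_idr : forall X Y (f : Mor X Y), cmp f (idm X) = f;
  cmp_addl : forall X Y Z (g1 g2 : Mor Y Z) (f : Mor X Y),
      cmp (g1 + g2) f = cmp g1 f + cmp g2 f;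
  cmp_addr : forall X Y Z (g : Mor Y Z) (f1 f2 : Mor X Y),
      cmp g (f1 + f2) = cmp g f1 + cmp g f2;
  zero_obj : obj;
  zero_obj_hom : forall X (f : Mor zero_obj X), f = 0;
  biprod : forall X Y : obj, exists (P : obj) (i1 : Mor X P) (i2 : Mor Y P)
      (p1 : Mor P X) (p2 : Mor P Y),
      [/\ cmp p1 i1 = idm X, cmp p2 i2 = idm Y, cmp p1 i2 = 0,
          cmp p2 i1 = 0 & cmp i1 p1 + cmp i2 p2 = idm P];
  sh : obj -> obj;
  shm : forall X Y, Mor X Y -> Mor (sh X) (sh Y);
  shm_id : forall X, shm (idm X) = idm (sh X);
  shm_comp : forall X Y Z (g : Mor Y Z) (f : Mor X Y),
      shm (cmp g f) = cmp (shm g) (shm f);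
  shm_add : forall X Y (f g : Mor X Y), shm (f + g) = shm f + shm g;
  shm_inj : forall X Y (f g : Mor X Y), shm f = shm g -> f = g;
  shm_surj : forall X Y (g : Mor (sh X) (sh Y)), exists f, shm f = g;
  sh_esurj : forall Y, exists X (u : Mor (sh X) Y) (v : Mor Y (sh X)),
      cmp v u = idm (sh X) /\ cmp u v = idm Y;
  dist : forall X Y Z, Mor X Y -> Mor Y Z -> Mor Z (sh X) -> Prop;
  dist_iso : forall X Y Z (f : Mor X Y) (g : Mor Y Z) (h : Mor Z (sh X))
      X' Y' Z' (f' : Mor X' Y') (g' : Mor Y' Z') (h' : Mor Z' (sh X'))
      (u : Mor X X') (v : Mor Y Y') (w : Mor Z Z')
      (u' : Mor X' X) (v' : Mor Y' Y) (w' : Mor Z' Z),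
      cmp u' u = idm X -> cmp u u' = idm X' ->
      cmp v' v = idm Y -> cmp v v' = idm Y' ->
      cmp w' w = idm Z -> cmp w w' = idm Z' ->
      cmp v f = cmp f' u -> cmp w g = cmp g' v ->
      cmp (shm u) h = cmp h' w ->
      dist f g h -> dist f' g' h';
  dist_id : forall X, dist (idm X) (0 : Mor X zero_obj) (0 : Mor zero_obj (sh X));
  dist_ext : forall X Y (f : Mor X Y), exists Z (g : Mor Y Z) (h : Mor Z (sh X)),
      dist f g h;
  dist_rot : forall X Y Z (f : Mor X Y) (g : Mor Y Z) (h : Mor Z (sh X)),
      dist f g h <-> dist g h (- shm f);
  dist_mor : forall X Y Z (f : Mor X Y) (g : Mor Y Z) (h : Mor Z (sh X))
      X' Y' Z' (f' : Mor X' Y') (g' : Mor Y' Z') (h' : Mor Z' (sh X'))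
      (u : Mor X X') (v : Mor Y Y'),
      dist f g h -> dist f' g' h' -> cmp v f = cmp f' u ->
      exists w : Mor Z Z', cmp w g = cmp g' v /\ cmp (shm u) h = cmp h' w;
  dist_oct : forall X Y Z (f : Mor X Y) (g : Mor Y Z)
      Z' (f1 : Mor Y Z') (f2 : Mor Z' (sh X))
      X' (g1 : Mor Z X') (g2 : Mor X' (sh Y))
      Y' (h1 : Mor Z Y') (h2 : Mor Y' (sh X)),
      dist f f1 f2 -> dist g g1 g2 -> dist (cmp g f) h1 h2 ->
      exists (u : Mor Z' Y') (v : Mor Y' X'),
      [/\ dist u v (cmp (shm f1) g2), cmp u f1 = cmp h1 g,
          cmp h2 u = f2, cmp v h1 = g1 & cmp g2 v = cmp (shm f) h2]
}.

Arguments cmp {t X Y Z}.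
Arguments idm {t}.
Arguments sh {t}.
Arguments shm {t X Y}.
Arguments dist {t X Y Z}.

Section Sub.
Variable C : TriCat.

Definition iso (X Y : obj C) : Prop :=
  exists (u : Mor X Y) (v : Mor Y X), cmp v u = idm X /\ cmp u v = idm Y.

Definition summand (X Z : obj C) : Prop :=
  exists (Y : obj C) (i1 : Mor X Z) (i2 : Mor Y Z) (p1 : Mor Z X) (p2 : Mor Z Y),
    [/\ cmp p1 i1 = idm X, cmp p2 i2 = idm Y, cmp p1 i2 = 0,
        cmp p2 i1 = 0 & cmp i1 p1 + cmp i2 p2 = idm Z].

Definition is_biprod (X Y Z : obj C) : Prop :=
  exists (i1 : Mor X Z) (i2 : Mor Y Z) (p1 : Mor Z X) (p2 : Mor Z Y),
    [/\ cmp p1 i1 = idm X, cmp p2 i2 = idm Y, cmp p1 i2 = 0,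
        cmp p2 i1 = 0 & cmp i1 p1 + cmp i2 p2 = idm Z].

(* A (full) subcategory is given by its class of objects; it is
   additive, closed under isomorphisms and direct summands. *)
Definition subcat (P : obj C -> Prop) : Prop :=
  [/\ P (zero_obj C),
      (forall X Y Z, P X -> P Y -> is_biprod X Y Z -> P Z),
      (forall X Y, iso X Y -> P X -> P Y) &
      (forall X Z, summand X Z -> P Z -> P X)].

Definition Ext1 (X Y : obj C) := Mor X (sh Y).
Definition Ext1_zero (P Q : obj C -> Prop) : Prop :=
  forall X Y, P X -> Q Y -> forall f : Ext1 X Y, f = 0.

Definition shift1 (P : obj C -> Prop) : obj C -> Prop :=
  fun X => exists Y, P Y /\ iso (sh Y) X.
Definition shiftm1 (P : obj C -> Prop) : obj C -> Prop :=
  fun X => exists Y, P Y /\ iso (sh X) Y.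

Definition star (P Q : obj C -> Prop) : obj C -> Prop :=
  fun Z => exists (M N : obj C) (f : Mor M Z) (g : Mor Z N) (h : Mor N (sh M)),
    [/\ P M, Q N & dist f g h].

Definition inter (P Q : obj C -> Prop) : obj C -> Prop := fun X => P X /\ Q X.

Definition cotorsion (U V : obj C -> Prop) : Prop :=
  Ext1_zero U V /\ forall X, star U (shift1 V) X.

Definition twin_cotorsion (S T U V : obj C -> Prop) : Prop :=
  [/\ cotorsion S T, cotorsion U V & Ext1_zero S V].

Definition Wc (T U : obj C -> Prop) := inter T U.
Definition Cminus (S T U : obj C -> Prop) := star (shiftm1 S) (Wc T U).
Definition Cplus (T U V : obj C -> Prop) := star (Wc T U) (shift1 V).
Definition Hc (S T U V : obj C -> Prop) := inter (Cplus T U V) (Cminus S T U).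

End Sub.

(* For a cotorsion pair (P, Q), the approximation triangle P0 -> Y[1] -> Q0[1] of Y[1] splits
   as soon as Ext^1(P, Y) = 0, so Q is exactly the right Ext^1-perpendicular of P.
   (1) The octahedral axiom for b o a gives a triangle S[-1] -> K_C -> U -> S, and U lies in
   T since it is an extension of T and V[1], both Ext^1-perpendicular to S; so K_C is in
   S[-1] * W.
   (2) If W' -> C -> V'[1] is a triangle with W' in W, the octahedral axiom for C -> V'[1]
   and k_C gives triangles K_C -> V'[1] -> E and V[1] -> E -> W'[1]; hence E is in T[1],
   K_C is in T * V[1], and T * V[1] is contained in W * V[1] by the same argument applied
   to the (U, V)-approximation of the T-part. *)
From mathcomp Require Import all_boot all_algebra.
Set Implicit Arguments.
Unset Strict Implicit.
Unset Printing Implicit Defensive.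
Import GRing.Theory.
Local Open Scope ring_scope.

Section TriangulatedFacts.
Variable C : TriCat.
Implicit Types X Y Z W : obj C.

Lemma cmp0l X Y Z (f : Mor X Y) : cmp (0 : Mor Y Z) f = 0.
Proof. by apply: (addrI (cmp (0 : Mor Y Z) f)); rewrite -cmp_addl !addr0. Qed.

Lemma cmp0r X Y Z (g : Mor Y Z) : cmp g (0 : Mor X Y) = 0.
Proof. by apply: (addrI (cmp g (0 : Mor X Y))); rewrite -cmp_addr !addr0. Qed.

Lemma cmpNl X Y Z (g : Mor Y Z) (f : Mor X Y) : cmp (- g) f = - cmp g f.
Proof. by apply: (addrI (cmp g f)); rewrite -cmp_addl !subrr cmp0l. Qed.

Lemma cmpNr X Y Z (g : Mor Y Z) (f : Mor X Y) : cmp g (- f) = - cmp g f.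
Proof. by apply: (addrI (cmp g f)); rewrite -cmp_addr !subrr cmp0r. Qed.

Lemma shm0 X Y : shm (0 : Mor X Y) = 0.
Proof. by apply: (addrI (shm (0 : Mor X Y))); rewrite -shm_add !addr0. Qed.

Lemma shmN X Y (f : Mor X Y) : shm (- f) = - shm f.
Proof. by apply: (addrI (shm f)); rewrite -shm_add !subrr shm0. Qed.

Lemma iso_refl X : iso X X.
Proof. by exists (idm X), (idm X); rewrite cmp_idl. Qed.

Lemma iso_sym X Y : iso X Y -> iso Y X.
Proof. by move=> [u [v [vu uv]]]; exists v, u. Qed.

Lemma dist_rotl X Y Z (f : Mor X Y) (g : Mor Y Z) (h : Mor Z (sh X)) :
  dist f g h -> dist g h (- shm f).
Proof. by move/(dist_rot f g h). Qed.

Lemma dist_rotr X Y Z (f : Mor X Y) (g : Mor Y Z) (h : Mor Z (sh X)) :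
  dist g h (- shm f) -> dist f g h.
Proof. by move/(dist_rot f g h). Qed.

Lemma dist_comp0 X Y Z (f : Mor X Y) (g : Mor Y Z) (h : Mor Z (sh X)) :
  dist f g h -> cmp g f = 0.
Proof.
move=> D; have [w [gf _]] := dist_mor (dist_id X) D (erefl (cmp f (idm X))).
by rewrite -gf cmp0r.
Qed.

Lemma dist_weak_kernel X Y Z (f : Mor X Y) (g : Mor Y Z) (h : Mor Z (sh X)) :
  dist f g h -> forall W (x : Mor W Y), cmp g x = 0 -> exists x', x = cmp f x'.
Proof.
move=> D W x gx.
have E : cmp (0 : Mor (zero_obj C) Z) 0 = cmp g x by rewrite gx cmp0l.
have [w [_ Hw]] := dist_mor (dist_rotl (dist_id W)) (dist_rotl D) E.
have [x' Ex'] := shm_surj w.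
exists x'; apply: shm_inj; apply: oppr_inj.
by rewrite shm_comp -cmpNl Ex' -Hw cmpNr shm_id cmp_idr.
Qed.

Lemma dist_weak_cokernel X Y Z (f : Mor X Y) (g : Mor Y Z) (h : Mor Z (sh X)) :
  dist f g h -> forall W (y : Mor Y W), cmp y f = 0 -> exists y', y = cmp y' g.
Proof.
move=> D W y yf.
have E : cmp (shm y) (- shm f) =
         cmp (0 : Mor (zero_obj C) (sh W)) (0 : Mor (sh X) (zero_obj C)).
  by rewrite cmpNr -shm_comp yf shm0 oppr0 cmp0l.
have [w [Hw _]] := dist_mor (dist_rotl (dist_rotl (dist_rotl D)))
                            (dist_rotl (dist_rotl (dist_id W))) E.
have [y' Ey'] := shm_surj w.
exists y'; apply: shm_inj; apply: oppr_inj.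
by rewrite shm_comp -cmpNr Ey' Hw cmpNl shm_id cmp_idl.
Qed.

Lemma dist_neg X Y Z (f : Mor X Y) (g : Mor Y Z) (h : Mor Z (sh X)) :
  dist f g h -> dist (- f) (- g) h.
Proof.
have Nid : cmp (- idm Y) (- idm Y) = idm Y by rewrite cmpNl cmpNr opprK cmp_idl.
apply: (dist_iso (u := idm X) (v := - idm Y) (w := idm Z)
                 (u' := idm X) (v' := - idm Y) (w' := idm Z)) => //;
  rewrite ?shm_id ?cmpNl ?cmpNr ?opprK !cmp_idl ?cmp_idr //.
Qed.

Lemma dist_shm X Y Z (f : Mor X Y) (g : Mor Y Z) (h : Mor Z (sh X)) :
  dist (shm f) (shm g) (- shm h) -> dist f g h.
Proof.
by move=> /dist_neg D; do 3 apply: dist_rotr.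
Qed.

Lemma dist_iso3 X Y Z Z' (f : Mor X Y) (g : Mor Y Z) (h : Mor Z (sh X))
    (v : Mor Z Z') (u : Mor Z' Z) :
  cmp u v = idm Z -> cmp v u = idm Z' -> dist f g h -> dist f (cmp v g) (cmp h u).
Proof.
move=> uv vu; apply: (dist_iso (u := idm X) (v := idm Y) (w := v)
                                (u' := idm X) (v' := idm Y) (w' := u)) => //;
  by rewrite ?shm_id ?cmp_idl ?cmp_idr // -cmp_assoc uv cmp_idr.
Qed.

Lemma dist0_retraction X Y Z (f : Mor X Y) (g : Mor Y Z) :
  dist f g (0 : Mor Z (sh X)) -> exists r : Mor Y X, cmp r f = idm X.
Proof.
move=> /dist_rotl /dist_rotl D.
have [y' Hy'] := dist_weak_cokernel D (cmp0r _ (idm (sh X))).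
have [r' Er'] := shm_surj y'.
exists (- r'); apply: shm_inj.
by rewrite shm_comp shmN shm_id Hy' -Er' cmpNl cmpNr.
Qed.

Lemma dist0_section X Y Z (f : Mor X Y) (g : Mor Y Z) :
  dist f g (0 : Mor Z (sh X)) -> exists s : Mor Z Y, cmp g s = idm Z.
Proof.
move=> /dist_rotl D.
by have [s ->] := dist_weak_kernel D (cmp0l _ (idm Z)); exists s.
Qed.

Lemma dist0_summand X Y Z (f : Mor X Y) (g : Mor Y Z) :
  dist f g (0 : Mor Z (sh X)) -> summand X Y.
Proof.
move=> D; have [r rf] := dist0_retraction D; have [s gs] := dist0_section D.
have gf := dist_comp0 D.
have [s' [rs' gs']] : exists s' : Mor Z Y, cmp r s' = 0 /\ cmp g s' = idm Z.
  exists (s - cmp f (cmp r s)); rewrite !cmp_addr !cmpNr !cmp_assoc rf gf.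
  by rewrite cmp_idl !cmp0l subrr oppr0 addr0.
have ef : cmp (idm Y - cmp f r - cmp s' g) f = 0.
  rewrite !cmp_addl !cmpNl cmp_idl -!cmp_assoc rf gf cmp0r cmp_idr.
  by rewrite subrr sub0r oppr0.
have e0 : idm Y - cmp f r - cmp s' g = 0.
  have [e' He'] := dist_weak_cokernel D ef.
  have es' : cmp (idm Y - cmp f r - cmp s' g) s' = 0.
    rewrite !cmp_addl !cmpNl cmp_idl -!cmp_assoc rs' gs' cmp0r cmp_idr.
    by rewrite subr0 subrr.
  by rewrite He' -[e']cmp_idr -gs' cmp_assoc -He' es' cmp0l.
exists Z, f, s', r, g; split => //.
by apply/eqP; rewrite eq_sym -subr_eq0 opprD addrA e0.
Qed.

Lemma summand_iso X Z Z' : summand X Z -> iso Z Z' -> summand X Z'.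
Proof.
move=> [Y [i1 [i2 [p1 [p2 [e1 e2 e3 e4 e5]]]]]] [u [v [vu uv]]].
have mid W1 W2 (p : Mor Z W2) (i : Mor W1 Z) :
    cmp (cmp p v) (cmp u i) = cmp p i by rewrite cmp_assoc -(cmp_assoc p) vu cmp_idr.
exists Y, (cmp u i1), (cmp u i2), (cmp p1 v), (cmp p2 v); split; rewrite ?mid //.
by rewrite !cmp_assoc -cmp_addl -!(cmp_assoc u) -cmp_addr e5 cmp_idr uv.
Qed.

Lemma summand_shift X Z : summand (sh X) (sh Z) -> summand X Z.
Proof.
move=> [Y' [i1 [i2 [p1 [p2 [e1 e2 e3 e4 e5]]]]]].
have [Y [u [v [vu uv]]]] := sh_esurj Y'.
have [j1 Ej1] := shm_surj i1; have [j2 Ej2] := shm_surj (cmp i2 u).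
have [q1 Eq1] := shm_surj p1; have [q2 Eq2] := shm_surj (cmp v p2).
exists Y, j1, j2, q1, q2; split; apply: shm_inj;
  rewrite ?shm_add ?shm_comp ?shm_id ?shm0 ?Ej1 ?Ej2 ?Eq1 ?Eq2 //.
- by rewrite cmp_assoc -(cmp_assoc v) e2 cmp_idr vu.
- by rewrite cmp_assoc e3 cmp0l.
- by rewrite -cmp_assoc e4 cmp0r.
- by rewrite cmp_assoc -(cmp_assoc i2) uv cmp_idr e5.
Qed.

Definition hom_zero W B := forall y : Mor W B, y = 0.

Lemma hom_zero_ext X Y Z (f : Mor X Y) (g : Mor Y Z) (h : Mor Z (sh X)) W :
  dist f g h -> hom_zero W X -> hom_zero W Z -> hom_zero W Y.
Proof.
move=> D hX hZ y.
have [y' ->] := dist_weak_kernel D (hZ (cmp g y)).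
by rewrite (hX y') cmp0r.
Qed.

Lemma hom_zero_iso W B B' : iso B B' -> hom_zero W B -> hom_zero W B'.
Proof.
move=> [u [v [_ uv]]] hB y.
by rewrite -[y]cmp_idl -uv -cmp_assoc (hB (cmp v y)) cmp0r.
Qed.

Lemma hom_zero_shift1 (P Q : obj C -> Prop) X N :
  Ext1_zero P Q -> P X -> shift1 Q N -> hom_zero X N.
Proof. by move=> PQ PX [Y [QY isoN]]; apply: hom_zero_iso isoN (PQ X Y PX QY). Qed.

Lemma cotorsion_right_perp (P Q : obj C -> Prop) Y :
  cotorsion P Q -> subcat Q -> (forall X, P X -> hom_zero X (sh Y)) -> Q Y.
Proof.
move=> [_ approx] [_ _ _ Q_summand] perpY.
have [M [N [f [g [h [PM [Y' [QY' isoN]] D]]]]]] := approx (sh Y).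
rewrite (perpY M PM f) in D.
move: (dist_rotl D); rewrite shm0 oppr0 => /dist0_summand sumN.
apply: (Q_summand _ Y' _ QY'); apply: summand_shift.
exact: summand_iso sumN (iso_sym isoN).
Qed.

Lemma cotorsion_shift1 (P Q : obj C -> Prop) E :
  cotorsion P Q -> subcat Q -> (forall X, P X -> hom_zero X E) -> shift1 Q E.
Proof.
move=> cPQ sQ perpE; have [E0 isoE] := sh_esurj E.
exists E0; split; last exact: isoE.
apply: cotorsion_right_perp cPQ sQ _ => X PX.
exact: hom_zero_iso (iso_sym isoE) (perpE X PX).
Qed.

Lemma star_shift1_cone (P Q : obj C -> Prop) X Y Z
    (f : Mor X Y) (g : Mor Y Z) (h : Mor Z (sh X)) :
  dist f g h -> Q Y -> shift1 P Z -> star P Q X.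
Proof.
move=> D QY [M [PM [u [v [vu uv]]]]].
have [m Em] := shm_surj (cmp h u).
have D' := dist_iso3 uv vu D.
rewrite -Em -[shm m]opprK -shmN in D'.
by exists M, Y, (- m), f, (cmp v g); split => //; apply: dist_rotr.
Qed.

End TriangulatedFacts.

Section TwinCotorsion.
Variables (C : TriCat) (S T U V : obj C -> Prop).
Hypotheses (sT : subcat T) (sV : subcat V) (twin : twin_cotorsion S T U V).

Lemma T_of_dist_shift1V A B N (f : Mor A B) (g : Mor B N) (h : Mor N (sh A)) :
  dist f g h -> T B -> shift1 V N -> T A.
Proof.
have [cST _ eSV] := twin; have [eST _] := cST.
move=> D TB VN; apply: cotorsion_right_perp cST sT _ => X SX.
apply: hom_zero_ext (dist_rotl (dist_rotl D)) _ _.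
- exact: hom_zero_shift1 eSV SX VN.
- exact: eST X B SX TB.
Qed.

Lemma star_shift1_Cplus Y : star T (shift1 V) Y -> Cplus T U V Y.
Proof.
have [_ cUV _] := twin; have [eUV approx] := cUV.
move=> [T' [N [f [g [h [TT' VN D]]]]]].
have [U2 [N2 [f1 [g1 [h1 [UU2 VN2 D1]]]]]] := approx T'.
have [E [h1' [h2' D3]]] := dist_ext (cmp f f1).
have [u [v [D4 _ _ _ _]]] := dist_oct D1 D D3.
exists U2, E, (cmp f f1), h1', h2'; split => //.
  by split => //; apply: T_of_dist_shift1V D1 TT' VN2.
apply: cotorsion_shift1 cUV sV _ => X UX.
apply: hom_zero_ext D4 _ _; exact: hom_zero_shift1 eUV UX _.
Qed.

End TwinCotorsion.

Theorem claim3p2 (C : TriCat) (S T U V : obj C -> Prop) :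
  subcat S -> subcat T -> subcat U -> subcat V ->
  twin_cotorsion S T U V ->
  forall (X : obj C) (Sm1 T0 : obj C)
         (s : Mor Sm1 X) (a : Mor X T0) (t : Mor T0 (sh Sm1)),
  shiftm1 S Sm1 -> T T0 -> dist s a t ->
  forall (U0 V0 : obj C) (i : Mor U0 T0) (b : Mor T0 (sh V0)) (c : Mor (sh V0) (sh U0)),
  U U0 -> V V0 -> dist i b c ->
  forall (K : obj C) (j : Mor V0 K) (k : Mor K X),
  dist j k (cmp b a) ->
  Cminus S T U K /\ (Cplus T U V X -> Hc S T U V K).
Proof.
move=> _ sT _ sV twin X Sm1 T0 s a t SSm1 TT0 D1 U0 V0 i b c UU0 VV0 D2 K j k D3.
have [cST _ eSV] := twin; have [eST _] := cST.
have VsV0 : shift1 V (sh V0) by exists V0; split => //; apply: iso_refl.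
have CmK : Cminus S T U K.
  have [u [v [D4 _ _ _ _]]] :=
    dist_oct (dist_rotl D1) (dist_rotl D2) (dist_rotl (dist_rotl D3)).
  have [u0 Eu] := shm_surj u; have [v0 Ev] := shm_surj v.
  move: D4; rewrite -Eu -Ev cmpNr -shm_comp => /dist_shm D5.
  exists Sm1, U0, u0, v0, (cmp t i); split => //.
  by split => //; apply: (T_of_dist_shift1V sT twin D2 TT0 VsV0).
split => // [[W1 [N1 [x [y [z [[TW1 _] VN1 D6]]]]]]].
split => //; apply: (star_shift1_Cplus sT sV twin).
have [E [h1 [h2 D7]]] := dist_ext (cmp y k).
have [u [v [D8 _ _ _ _]]] := dist_oct (dist_rotl D3) (dist_rotl D6) D7.
apply: star_shift1_cone D7 VN1 _.
apply: cotorsion_shift1 cST sT _ => Y SY.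
apply: hom_zero_ext D8 _ _.
- exact: hom_zero_shift1 eSV SY VsV0.
- exact: eST Y W1 SY TW1.
Qed.
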